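(* Let $E$ be an imaginary quadratic field with $\mathrm{Emb}(\mathfrak{o}_E,\mathcal{O})\neq\emptyset$ and $\Delta_E\equiv 1\pmod 4$, and let $a_1,\dots,a_{h_E}$ be as in the context. Then $\varphi(\mathcal{T}(a_j))\equiv 1\pmod 2$ for every $1\le j\le h_E$, and \[\sum_{j=1}^{h_E}\varphi(\mathcal{T}(a_j))\equiv h_E\pmod 2.\]
   Context: $D$ is the $\mathbb{Q}$-algebra with basis $1,i,j,ij$, $i^2=j^2=-1$, $ij=-ji$ (definite, discriminant $2$), with reduced norm $\mathrm{Nm}$ and trace $\mathrm{Tr}$; $\mathcal{O}=\mathbb{Z}+\mathbb{Z}i+\mathbb{Z}j+\mathbb{Z}w$, $w=(1+i+j+ij)/2$ (Hurwitz order, class number one). $G=D^\times/\mathbb{Q}^\times$, $K_p$ image of $\mathcal{O}_p^\times$ in $G_p$, $K_f=\prod_pK_p$, $\Gamma$ image of $\mathcal{O}^\times$. $V_D$ = trace-zero elements, $L(\mathcal{O})=\{x\in\mathbb{Z}+2\mathcal{O}:\mathrm{Tr}x=0\}$, with $\mathbb{Z}$-basis $\mathbf b_1=-i+j+ij$, $\mathbf b_2=i-j+ij$, $\mathbf b_3=i+j-ij$; $\mathcal{T}(a_1\mathbf b_1+a_2\mathbf b_2+a_3\mathbf b_3)=(a_1,a_2,a_3)$. $\varphi(x)=x_1^3+x_2^3+x_3^3-x_1^2x_2-x_1^2x_3-x_2^2x_1-x_2^2x_3-x_3^2x_1-x_3^2x_2+2x_1x_2x_3$. $\mathrm{Emb}(\mathfrak{o}_E,\mathcal{O})$: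 embeddings $\iota:E\hookrightarrow D$ with $\iota(E)\cap\mathcal{O}\cong\mathfrak{o}_E$; $G$ acts by conjugation $(g\cdot\iota)(x)=g\iota(x)g^{-1}$. Fix $\iota_0\in\mathrm{Emb}(\mathfrak{o}_E,\mathcal{O})$, torus $T(R)=(\iota_0(E)\otimes R)^\times/R^\times$, $U=T(\mathbb{R})\prod_p\overline{\iota_0(\mathfrak{o}_{E,p}^\times)}$; $h_E=\#T(\mathbb{Q})\backslash T(\mathbb{A})/U$ is the class number. Choose $b_j\in T(\mathbb{A}_f)$ ($1\le j\le h_E$) with $T(\mathbb{A})=\bigsqcup_jT(\mathbb{Q})b_jU$ and write $b_j=\gamma_j(\gamma_j)_\infty^{-1}k_j$ with $\gamma_j\in G$, $\gamma_j^{-1}\cdot\iota_0\in\mathrm{Emb}(\mathfrak{o}_E,\mathcal{O})$, $k_j\in K_f$. Let $a_0\in\iota_0(E)\cap V_D$ with $\mathrm{Nm}(a_0)=-\Delta_E$ and $a_j=\gamma_j^{-1}a_0\gamma_j$; then $a_j\in L(\mathcal{O})$ and $\mathrm{Nm}(a_j)=-\Delta_E$. *)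

From HB Require Import structures.
From mathcomp Require Import all_boot all_order all_algebra.
From mathcomp Require Import ring.
Set Implicit Arguments. Unset Strict Implicit. Unset Printing Implicit Defensive.
Import Order.TTheory GRing.Theory Num.Theory.
Local Open Scope ring_scope.

(* x = qr x + qi x * i + qj x * j + qk x * (ij) *)
Record quat := Quat { qr : rat; qi : rat; qj : rat; qk : rat }.

Definition qadd (x y : quat) : quat :=
  Quat (qr x + qr y) (qi x + qi y) (qj x + qj y) (qk x + qk y).

(* Hamilton product with i^2 = j^2 = -1, ij = -ji *)
Definition qmul (x y : quat) : quat :=
  Quat (qr x * qr y - qi x * qi y - qj x * qj y - qk x * qk y)
       (qr x * qi y + qi x * qr y + qj x * qk y - qk x * qj y)
       (qr x * qj y - qi x * qk y + qj x * qr y + qk x * qi y)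
       (qr x * qk y + qi x * qj y - qj x * qi y + qk x * qr y).

Definition qc (c : rat) : quat := Quat c 0 0 0.
Definition qscale (c : rat) (x : quat) : quat := qmul (qc c) x.

Definition qI : quat := Quat 0 1 0 0.
Definition qJ : quat := Quat 0 0 1 0.
Definition qIJ : quat := qmul qI qJ.

Definition Nm (x : quat) : rat := qr x ^+ 2 + qi x ^+ 2 + qj x ^+ 2 + qk x ^+ 2.
Definition Tr (x : quat) : rat := 2 * qr x.
Definition qconj (x : quat) : quat := Quat (qr x) (- qi x) (- qj x) (- qk x).
Definition qinv (x : quat) : quat := qscale (Nm x)^-1 (qconj x).

Definition qw : quat := qscale (1 / 2) (qadd (qadd (qadd (qc 1) qI) qJ) qIJ).

Definition inO (x : quat) : Prop :=
  exists m1 m2 m3 m4 : int,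
    x = qadd (qadd (qadd (qc m1%:~R) (qscale m2%:~R qI))
                   (qscale m3%:~R qJ)) (qscale m4%:~R qw).

Definition inL (x : quat) : Prop :=
  Tr x = 0 /\ exists (n : int) (y : quat), inO y /\ x = qadd (qc n%:~R) (qscale 2 y).

Definition b1 : quat := Quat 0 (-1) 1 1.
Definition b2 : quat := Quat 0 1 (-1) 1.
Definition b3 : quat := Quat 0 1 1 (-1).

Definition T (x : quat) : rat * rat * rat :=
  ((qj x + qk x) / 2, (qi x + qk x) / 2, (qi x + qj x) / 2).

Lemma T_spec (x : quat) : Tr x = 0 ->
  let: (a1, a2, a3) := T x in
  x = qadd (qadd (qscale a1 b1) (qscale a2 b2)) (qscale a3 b3).
Proof.
case: x => r i j k; rewrite /Tr /= => /eqP; rewrite mulf_eq0 /= => /eqP ->.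
rewrite /qadd /qscale /qmul /qc /b1 /b2 /b3 /=; congr Quat; by field.
Qed.

Definition phi (x : rat * rat * rat) : rat :=
  let: (x1, x2, x3) := x in
  x1 ^+ 3 + x2 ^+ 3 + x3 ^+ 3
  - x1 ^+ 2 * x2 - x1 ^+ 2 * x3 - x2 ^+ 2 * x1 - x2 ^+ 2 * x3
  - x3 ^+ 2 * x1 - x3 ^+ 2 * x2 + 2 * x1 * x2 * x3.

Definition imag_quad_disc_1mod4 (dE : int) : Prop :=
  (dE < 0)%R /\ (dE %% 4)%Z = 1 /\
  (forall d : nat, (d * d)%:Z %| dE -> d = 1%N)%Z.

(* An embedding iota : E = Q(sqrt dE) -> D is determined by a = iota(sqrt dE),
   with a^2 = dE.  It lies in Emb(o_E, O) iff iota(E) \cap O = iota(o_E),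
   where o_E = Z[(1 + sqrt dE)/2] (dE = 1 mod 4), i.e.
   iota(o_E) = { m + n (1 + a)/2 : m, n in Z }. *)
Definition opt_emb (dE : int) (a : quat) : Prop :=
  qmul a a = qc dE%:~R /\
  forall u v : rat,
    inO (qadd (qc u) (qscale v a)) <->
    exists m n : int, u = m%:~R + n%:~R / 2 /\ v = n%:~R / 2.

Definition qconjug (g a : quat) : quat := qmul (qmul g a) (qinv g).

(* If a^2 = dE < 0 then a is a pure quaternion, and optimality of the
   embedding puts (1 + a)/2 in the Hurwitz order; reading off Hurwitz
   coordinates, T a is an integer triple with odd coordinate sum.  On integer
   triples phi (x) = x1 + x2 + x3 (mod 2), because x^3 = x^2 = x (mod 2) and the
   mixed cubic terms cancel in pairs.  Hence every phi (T a_j) is odd, and a sum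
   of h odd numbers is h modulo 2. *)

From mathcomp Require Import all_boot all_order all_algebra.
From mathcomp Require Import ring lra zify.
Import Order.TTheory GRing.Theory Num.Theory.
Local Open Scope ring_scope.

Lemma phi_sub_sum (x1 x2 x3 : rat) :
  phi (x1, x2, x3) - (x1 + x2 + x3) =
    (x1 + 1 - x2 - x3) * (x1 * (x1 - 1)) + (x2 + 1 - x1 - x3) * (x2 * (x2 - 1))
  + (x3 + 1 - x1 - x2) * (x3 * (x3 - 1))
  + 2 * (x1 * x2 * x3 - x1 * x2 - x1 * x3 - x2 * x3).
Proof. rewrite /phi; ring. Qed.

Lemma int_mul_pred_even (t : int) : exists u : int, t * (t - 1) = 2 * u.
Proof.
have [q [b [-> b01]]] : exists q b : int, t = 2 * q + b /\ (b = 0 \/ b = 1).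
  exists (t %/ 2)%Z, (t %% 2)%Z; lia.
case: b01 => ->; [exists (q * (2 * q - 1)) | exists (q * (2 * q + 1))]; ring.
Qed.

Lemma phi_intr_parity (X1 X2 X3 : int) :
  exists k : int, phi (X1%:~R, X2%:~R, X3%:~R) = (X1 + X2 + X3 + 2 * k)%:~R.
Proof.
have [u1 hu1] := int_mul_pred_even X1; have [u2 hu2] := int_mul_pred_even X2.
have [u3 hu3] := int_mul_pred_even X3.
exists ((X1 + 1 - X2 - X3) * u1 + (X2 + 1 - X1 - X3) * u2 + (X3 + 1 - X1 - X2) * u3
        + (X1 * X2 * X3 - X1 * X2 - X1 * X3 - X2 * X3)).
have castM (t u : int) : t * (t - 1) = 2 * u -> t%:~R * (t%:~R - 1) = 2 * u%:~R :> rat.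
  by move=> htu; rewrite -[1]/(1%:~R) -!rmorphB -!rmorphM /= htu rmorphM.
rewrite -[phi _](subrK (X1%:~R + X2%:~R + X3%:~R)) phi_sub_sum.
rewrite (castM _ _ hu1) (castM _ _ hu2) (castM _ _ hu3).
ring.
Qed.

Lemma qr_eq0_of_sqr_neg (a : quat) (c : rat) : qmul a a = qc c -> c < 0 -> qr a = 0.
Proof.
case: a => r x y z; rewrite /qmul /qc /= => -[s1 s2 s3 s4] c_neg.
have [rx ry rz] : [/\ r * x = 0, r * y = 0 & r * z = 0] by split; lra.
have gap : 0 < r ^+ 2 - c by have := sqr_ge0 r; lra.
have : r ^+ 2 * (r ^+ 2 - c) = (r * x) ^+ 2 + (r * y) ^+ 2 + (r * z) ^+ 2.
  by rewrite -s1; ring.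
rewrite rx ry rz expr0n /= !addr0 => /eqP.
by rewrite mulf_eq0 (gt_eqF gap) orbF sqrf_eq0 => /eqP.
Qed.

Lemma inO_coords (x : quat) : inO x -> exists m1 m2 m3 m4 : int,
  x = Quat (m1%:~R + m4%:~R / 2) (m2%:~R + m4%:~R / 2) (m3%:~R + m4%:~R / 2) (m4%:~R / 2).
Proof.
move=> [m1 [m2 [m3 [m4 ->]]]]; exists m1, m2, m3, m4.
rewrite /qadd /qscale /qmul /qc /qw /qI /qJ /qIJ /=; congr Quat; ring.
Qed.

Lemma opt_emb_half_one_add_inO (dE : int) (a : quat) :
  opt_emb dE a -> inO (qadd (qc (1 / 2)) (qscale (1 / 2) a)).
Proof. by case=> _ /(_ (1 / 2) (1 / 2)) [_]; apply; exists 0, 1; rewrite add0r. Qed.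

Lemma T_intr_odd_sum (a : quat) :
  qr a = 0 -> inO (qadd (qc (1 / 2)) (qscale (1 / 2) a)) ->
  exists X1 X2 X3 S : int,
    T a = (X1%:~R, X2%:~R, X3%:~R) /\ X1 + X2 + X3 = 2 * S + 1.
Proof.
case: a => r x y z /= -> /inO_coords [m1 [m2 [m3 [m4]]]].
rewrite /qadd /qscale /qmul /qc /= => -[e1 e2 e3 e4].
have m4_odd : m4 = 1 - 2 * m1.
  by apply: (@intr_inj rat); rewrite rmorphB rmorphM /=; lra.
exists (m3 + m4), (m2 + m4), (m2 + m3 + m4), (m2 + m3 + m4 - m1); split; last by lia.
rewrite /T /=; congr (_, _, _); rewrite !rmorphD /=; lra.
Qed.

Lemma sumr_odd (R : nzRingType) (n : nat) (F : 'I_n -> R) :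
  (forall i, exists k : int, F i = (2 * k + 1)%:~R) ->
  exists k : int, \sum_(i < n) F i = n%:R + (2 * k)%:~R.
Proof.
elim: n F => [|n IH] F F_odd; first by exists 0; rewrite big_ord0 mulr0 add0r.
rewrite big_ord_recr /=.
have [k ->] := IH (fun i => F (widen_ord (leqnSn n) i)) (fun i => F_odd _).
have [l ->] := F_odd ord_max.
exists (k + l).
rewrite -(@natr1 R n) mulrDr !intrD -!addrA; congr (_ + _).
by rewrite addrA addrC.
Qed.

Lemma phi_T_opt_emb_odd (dE : int) (a : quat) :
  dE < 0 -> opt_emb dE a -> exists k : int, phi (T a) = (2 * k + 1)%:~R.
Proof.
move=> dE_neg a_opt.
have a_pure : qr a = 0 by apply: qr_eq0_of_sqr_neg a_opt.1 _; rewrite ltrz0.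
have [X1 [X2 [X3 [S [-> odd_sum]]]]] :=
  T_intr_odd_sum _ a_pure (opt_emb_half_one_add_inO _ _ a_opt).
have [k ->] := phi_intr_parity X1 X2 X3.
by exists (S + k); rewrite odd_sum; congr _%:~R; ring.
Qed.

Theorem lemma5p1 (dE : int) (hE : imag_quad_disc_1mod4 dE)
  (a0 : quat) (ha0 : opt_emb dE a0)
  (h : nat) (gam : 'I_h -> quat)
  (hgam : forall j, gam j <> qc 0 /\ opt_emb dE (qconjug (qinv (gam j)) a0)) :
  (forall j : 'I_h, exists k : int,
     phi (T (qconjug (qinv (gam j)) a0)) = (2 * k + 1)%:~R) /\
  (exists k : int,
     \sum_(j < h) phi (T (qconjug (qinv (gam j)) a0)) = h%:R + (2 * k)%:~R).
Proof.
have phi_odd j := phi_T_opt_emb_odd _ _ hE.1 (hgam j).2.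
by split=> //; apply: sumr_odd.
Qed.
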